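(* Let $(X,d,\kappa)$ be a digital metric space, where either $X$ is finite or $d$ is an $\ell_p$ metric for some $1\le p\le\infty$. Let $S,T:X\to X$. Then the following are equivalent: (i) $S$ and $T$ are compatible; (ii) $S$ and $T$ are compatible of type (A); (iii) $S$ and $T$ are compatible of type (P).
   Context: A digital metric space is a triple $(X,d,\kappa)$ where $X\subset\mathbb{Z}^n$ for some positive integer $n$, $\kappa$ is an adjacency relation on $X$ (so $(X,\kappa)$ is a graph), and $d$ is a metric on $X$. For $x,y\in\mathbb{Z}^n$, the $\ell_p$ metric is $d(x,y)=(\sum_{i=1}^n|x_i-y_i|^p)^{1/p}$ for $1\le p<\infty$ and $d(x,y)=\max_i|x_i-y_i|$ for $p=\infty$. Limits are taken with respect to the metric $d$. Call a sequence $\{x_n\}\subset X$ admissible if $\lim_{n\to\infty}S(x_n)=\lim_{n\to\infty}T(x_n)=t$ for some $t\in X$. $S$ and $T$ are compatible if $\lim_{n\to\infty}d(S(T(x_n)),T(S(x_n)))=0$ for every admissible sequence; compatible of type (A) if $\lim_{n\to\infty}d(S(T(x_n)),T(T(x_n)))=0=\lim_{n\to\infty}d(T(S(x_n)),S(S(x_n)))$ for every admissible sequence; compatible of type (P) if $\lim_{n\to\infty}d(S(S(x_n)),T(T(x_n)))=0$ for every admissible sequence. *)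

From Stdlib Require Import Reals Lra ZArith List.
Import ListNotations.
Open Scope R_scope.

(* A point of Z^n is a list of integers of length n. *)
Definition point := list Z.

(* a^p for a >= 0, p > 0, with the convention 0^p = 0
   (Stdlib's Rpower 0 p is 1, so we guard the zero case). *)
Definition rpow (a p : R) : R :=
  if Req_EM_T a 0 then 0 else Rpower a p.

Inductive lp_exp := Lp (p : R) | Linf.

Definition lp_exp_valid (e : lp_exp) : Prop :=
  match e with Lp p => 1 <= p | Linf => True end.

Definition coord_diffs (x y : point) : list R :=
  map (fun ab => IZR (Z.abs (fst ab - snd ab))) (combine x y).

Definition lp_dist (e : lp_exp) (x y : point) : R :=
  match e with
  | Lp p => rpow (fold_right Rplus 0 (map (fun a => rpow a p) (coord_diffs x y))) (1 / p)
  | Linf => fold_right Rmax 0 (coord_diffs x y)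
  end.

Definition is_metric_on (X : point -> Prop) (d : point -> point -> R) : Prop :=
  (forall x y, X x -> X y -> 0 <= d x y) /\
  (forall x y, X x -> X y -> (d x y = 0 <-> x = y)) /\
  (forall x y, X x -> X y -> d x y = d y x) /\
  (forall x y z, X x -> X y -> X z -> d x z <= d x y + d y z).

Definition is_adjacency_on (X : point -> Prop) (kappa : point -> point -> Prop) : Prop :=
  (forall x y, kappa x y -> X x /\ X y) /\
  (forall x y, kappa x y -> kappa y x) /\
  (forall x, ~ kappa x x).

Definition digital_metric_space (n : nat) (X : point -> Prop)
  (d : point -> point -> R) (kappa : point -> point -> Prop) : Prop :=
  (forall x, X x -> length x = n) /\ is_adjacency_on X kappa /\ is_metric_on X d.

Definition finite_set (X : point -> Prop) : Prop :=
  exists l : list point, forall x, X x -> In x l.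

Definition d_lim (d : point -> point -> R) (u : nat -> point) (t : point) : Prop :=
  Un_cv (fun k => d (u k) t) 0.

Definition admissible (X : point -> Prop) (d : point -> point -> R)
  (S T : point -> point) (x : nat -> point) : Prop :=
  (forall k, X (x k)) /\
  exists t, X t /\ d_lim d (fun k => S (x k)) t /\ d_lim d (fun k => T (x k)) t.

Definition compatible X d (S T : point -> point) : Prop :=
  forall x, admissible X d S T x ->
    Un_cv (fun k => d (S (T (x k))) (T (S (x k)))) 0.

Definition compatible_A X d (S T : point -> point) : Prop :=
  forall x, admissible X d S T x ->
    Un_cv (fun k => d (S (T (x k))) (T (T (x k)))) 0 /\
    Un_cv (fun k => d (T (S (x k))) (S (S (x k)))) 0.

Definition compatible_P X d (S T : point -> point) : Prop :=
  forall x, admissible X d S T x ->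
    Un_cv (fun k => d (S (S (x k))) (T (T (x k)))) 0.

(* Under either hypothesis X is uniformly discrete: a finite set has a least
   positive distance, and distinct points of Z^n are at l_p distance >= 1.
   Hence every convergent sequence in X is eventually constant, so along an
   admissible sequence S x_k = T x_k = t eventually, and each of the three
   compatibility conditions reduces to the coincidence S t = T t. *)

From Stdlib Require Import Reals ZArith List.
From Stdlib Require Import Lra Lia Classical.
Open Scope R_scope.

Definition uniformly_discrete (X : point -> Prop) (d : point -> point -> R) : Prop :=
  exists delta, 0 < delta /\ forall x y, X x -> X y -> d x y < delta -> x = y.

Lemma metric_pos X d x y :
  is_metric_on X d -> X x -> X y -> x <> y -> 0 < d x y.
Proof.
  intros [Hnn [Hzero _]] Xx Xy Hxy.
  destruct (Hnn x y Xx Xy) as [Hlt | Heq]; [exact Hlt |].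
  exfalso; apply Hxy, (Hzero x y Xx Xy); auto.
Qed.

Lemma exists_pos_lower_bound {A : Type} (P : A -> Prop) (f : A -> R) (l : list A) :
  (forall a, In a l -> P a -> 0 < f a) ->
  exists delta, 0 < delta /\ forall a, In a l -> P a -> delta <= f a.
Proof.
  induction l as [| b l IH]; intros Hpos.
  - exists 1; split; [lra | intros a []].
  - destruct IH as [delta [Hdelta Hbound]]; [intros a Ha; apply Hpos; now right |].
    destruct (classic (P b)) as [Pb | nPb].
    + exists (Rmin delta (f b)); split.
      * apply Rmin_pos; [exact Hdelta | apply Hpos; [left |]; auto].
      * intros a [<- | Ha] Pa; [apply Rmin_r |].
        eapply Rle_trans; [apply Rmin_l | auto].
    + exists delta; split; [exact Hdelta |].
      intros a [<- | Ha] Pa; [contradiction | auto].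
Qed.

Lemma finite_uniformly_discrete X d :
  is_metric_on X d -> finite_set X -> uniformly_discrete X d.
Proof.
  intros Hmet [l Hl].
  destruct (exists_pos_lower_bound
              (fun xy => X (fst xy) /\ X (snd xy) /\ fst xy <> snd xy)
              (fun xy => d (fst xy) (snd xy)) (list_prod l l))
    as [delta [Hdelta Hbound]].
  { intros [x y] _ (Xx & Xy & Hxy); exact (metric_pos X d x y Hmet Xx Xy Hxy). }
  exists delta; split; [exact Hdelta |].
  intros x y Xx Xy Hlt; apply NNPP; intros Hxy.
  assert (delta <= d x y) by
    (apply (Hbound (x, y)); [apply in_prod; auto | simpl; auto]).
  lra.
Qed.

Lemma coord_diffs_nonneg x y a : In a (coord_diffs x y) -> 0 <= a.
Proof.
  unfold coord_diffs; intros Ha; apply in_map_iff in Ha.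
  destruct Ha as [[u v] [<- _]]; apply IZR_le; lia.
Qed.

Lemma coord_diffs_ge1 x y :
  length x = length y -> x <> y -> exists a, In a (coord_diffs x y) /\ 1 <= a.
Proof.
  revert y; induction x as [| u x IH]; intros [| v y] Hlen Hxy;
    simpl in Hlen; try discriminate; [congruence |].
  unfold coord_diffs in *; simpl.
  destruct (Z.eq_dec u v) as [<- | Huv].
  - destruct (IH y) as [a [Ha Ha1]]; [lia | congruence |].
    exists a; auto.
  - exists (IZR (Z.abs (u - v))); split; [left; reflexivity | apply IZR_le; lia].
Qed.

Lemma rpow_nonneg a p : 0 <= rpow a p.
Proof.
  unfold rpow; destruct (Req_EM_T a 0); [lra | left; apply exp_pos].
Qed.

Lemma rpow_ge1 a p : 1 <= a -> 0 <= p -> 1 <= rpow a p.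
Proof.
  intros Ha Hp; unfold rpow; destruct (Req_EM_T a 0); [lra |].
  rewrite <- (Rpower_O a) by lra; apply Rle_Rpower; lra.
Qed.

Lemma fold_right_Rplus_nonneg l :
  (forall b, In b l -> 0 <= b) -> 0 <= fold_right Rplus 0 l.
Proof.
  induction l as [| b l IH]; simpl; intros Hnn; [lra |].
  assert (0 <= b) by auto; assert (0 <= fold_right Rplus 0 l) by auto; lra.
Qed.

Lemma fold_right_Rplus_ge l a :
  (forall b, In b l -> 0 <= b) -> In a l -> a <= fold_right Rplus 0 l.
Proof.
  induction l as [| b l IH]; simpl; intros Hnn Ha; [contradiction |].
  assert (0 <= b) by auto.
  assert (0 <= fold_right Rplus 0 l) by (apply fold_right_Rplus_nonneg; auto).
  destruct Ha as [<- | Ha]; [lra |].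
  assert (a <= fold_right Rplus 0 l) by auto; lra.
Qed.

Lemma fold_right_Rmax_ge l a : In a l -> a <= fold_right Rmax 0 l.
Proof.
  induction l as [| b l IH]; simpl; intros Ha; [contradiction |].
  destruct Ha as [<- | Ha]; [apply Rmax_l |].
  eapply Rle_trans; [apply IH, Ha | apply Rmax_r].
Qed.

Lemma lp_dist_ge1 e x y :
  lp_exp_valid e -> length x = length y -> x <> y -> 1 <= lp_dist e x y.
Proof.
  intros He Hlen Hxy.
  destruct (coord_diffs_ge1 x y Hlen Hxy) as [a [Ha Ha1]].
  destruct e as [p |]; simpl in *.
  - apply rpow_ge1; [| unfold Rdiv; apply Rmult_le_pos; [lra | left; apply Rinv_0_lt_compat; lra]].
    apply Rle_trans with (rpow a p); [apply rpow_ge1; lra |].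
    apply fold_right_Rplus_ge.
    + intros b Hb; apply in_map_iff in Hb; destruct Hb as [c [<- _]]; apply rpow_nonneg.
    + apply in_map_iff; eauto.
  - eapply Rle_trans; [exact Ha1 | apply fold_right_Rmax_ge, Ha].
Qed.

Lemma lp_uniformly_discrete n X d e :
  (forall x, X x -> length x = n) -> lp_exp_valid e ->
  (forall x y, X x -> X y -> d x y = lp_dist e x y) -> uniformly_discrete X d.
Proof.
  intros Hlen He Hd; exists 1; split; [lra |].
  intros x y Xx Xy Hlt; apply NNPP; intros Hxy.
  rewrite Hd in Hlt by assumption.
  assert (1 <= lp_dist e x y); [| lra].
  apply lp_dist_ge1; [exact He | rewrite !Hlen by assumption; reflexivity | exact Hxy].
Qed.

Lemma Un_cv_eventually_const (f : nat -> R) c N :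
  (forall k, (N <= k)%nat -> f k = c) -> (Un_cv f 0 <-> c = 0).
Proof.
  intros Hf; split.
  - intros Hcv; apply NNPP; intros Hc.
    destruct (Hcv (Rabs c) (Rabs_pos_lt c Hc)) as [M HM].
    specialize (HM (max N M) ltac:(lia)).
    unfold R_dist in HM; rewrite Hf, Rminus_0_r in HM by lia; lra.
  - intros -> eps Heps; exists N; intros k Hk.
    unfold R_dist; rewrite Hf, Rminus_0_r, Rabs_R0 by lia; exact Heps.
Qed.

Section UniformlyDiscrete.

Variables (X : point -> Prop) (d : point -> point -> R) (S T : point -> point).
Hypothesis metric_d : is_metric_on X d.
Hypothesis discrete_X : uniformly_discrete X d.
Hypothesis S_X : forall x, X x -> X (S x).
Hypothesis T_X : forall x, X x -> X (T x).

Definition coincide_at_limits : Prop :=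
  forall (x : nat -> point) t, (forall k, X (x k)) -> X t ->
    d_lim d (fun k => S (x k)) t -> d_lim d (fun k => T (x k)) t -> S t = T t.

Lemma d_lim_eventually_eq u t :
  (forall k, X (u k)) -> X t -> d_lim d u t ->
  exists N, forall k, (N <= k)%nat -> u k = t.
Proof.
  destruct discrete_X as [delta [Hdelta Hsep]].
  intros Hu Ht Hlim; destruct (Hlim delta Hdelta) as [N HN].
  exists N; intros k Hk; specialize (HN k Hk).
  unfold R_dist in HN; rewrite Rminus_0_r in HN.
  apply Hsep; auto; pose proof (Rle_abs (d (u k) t)); lra.
Qed.

Lemma eventually_coincide x t :
  (forall k, X (x k)) -> X t ->
  d_lim d (fun k => S (x k)) t -> d_lim d (fun k => T (x k)) t ->
  exists N, forall k, (N <= k)%nat -> S (x k) = t /\ T (x k) = t.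
Proof.
  intros Hx Xt HS HT.
  destruct (d_lim_eventually_eq _ t (fun k => S_X _ (Hx k)) Xt HS) as [N1 HN1].
  destruct (d_lim_eventually_eq _ t (fun k => T_X _ (Hx k)) Xt HT) as [N2 HN2].
  exists (max N1 N2); intros k Hk; split; [apply HN1 | apply HN2]; lia.
Qed.

Lemma Un_cv_dist_eventually_eq (u v : nat -> point) a b N :
  X a -> X b -> (forall k, (N <= k)%nat -> u k = a /\ v k = b) ->
  (Un_cv (fun k => d (u k) (v k)) 0 <-> a = b).
Proof.
  intros Xa Xb Huv; destruct metric_d as [_ [Hzero _]].
  rewrite <- (Hzero a b Xa Xb).
  apply Un_cv_eventually_const with N.
  intros k Hk; destruct (Huv k Hk) as [-> ->]; reflexivity.
Qed.

Lemma compatible_iff_coincide : compatible X d S T <-> coincide_at_limits.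
Proof.
  split.
  - intros Hcomp x t Hx Xt HS HT.
    destruct (eventually_coincide x t Hx Xt HS HT) as [N HN].
    apply (Un_cv_dist_eventually_eq (fun k => S (T (x k))) (fun k => T (S (x k)))
             (S t) (T t) N); auto.
    + intros k Hk; destruct (HN k Hk) as [-> ->]; auto.
    + apply Hcomp; split; eauto.
  - intros Hco x [Hx [t [Xt [HS HT]]]].
    destruct (eventually_coincide x t Hx Xt HS HT) as [N HN].
    apply (Un_cv_dist_eventually_eq _ _ (S t) (T t) N); auto.
    + intros k Hk; destruct (HN k Hk) as [-> ->]; auto.
    + exact (Hco x t Hx Xt HS HT).
Qed.

Lemma compatible_A_iff_coincide : compatible_A X d S T <-> coincide_at_limits.
Proof.
  split.
  - intros HA x t Hx Xt HS HT.
    destruct (eventually_coincide x t Hx Xt HS HT) as [N HN].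
    apply (Un_cv_dist_eventually_eq (fun k => S (T (x k))) (fun k => T (T (x k)))
             (S t) (T t) N); auto.
    + intros k Hk; destruct (HN k Hk) as [_ ->]; auto.
    + apply HA; split; eauto.
  - intros Hco x [Hx [t [Xt [HS HT]]]].
    destruct (eventually_coincide x t Hx Xt HS HT) as [N HN].
    pose proof (Hco x t Hx Xt HS HT) as Hst.
    split.
    + apply (Un_cv_dist_eventually_eq _ _ (S t) (T t) N); auto.
      intros k Hk; destruct (HN k Hk) as [_ ->]; auto.
    + apply (Un_cv_dist_eventually_eq _ _ (T t) (S t) N); auto.
      intros k Hk; destruct (HN k Hk) as [-> _]; auto.
Qed.

Lemma compatible_P_iff_coincide : compatible_P X d S T <-> coincide_at_limits.
Proof.
  split.
  - intros HP x t Hx Xt HS HT.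
    destruct (eventually_coincide x t Hx Xt HS HT) as [N HN].
    apply (Un_cv_dist_eventually_eq (fun k => S (S (x k))) (fun k => T (T (x k)))
             (S t) (T t) N); auto.
    + intros k Hk; destruct (HN k Hk) as [-> ->]; auto.
    + apply HP; split; eauto.
  - intros Hco x [Hx [t [Xt [HS HT]]]].
    destruct (eventually_coincide x t Hx Xt HS HT) as [N HN].
    apply (Un_cv_dist_eventually_eq _ _ (S t) (T t) N); auto.
    + intros k Hk; destruct (HN k Hk) as [-> ->]; auto.
    + exact (Hco x t Hx Xt HS HT).
Qed.

End UniformlyDiscrete.

Theorem theorem3p3 (n : nat) (X : point -> Prop) (d : point -> point -> R)
  (kappa : point -> point -> Prop) (S T : point -> point) :
  digital_metric_space n X d kappa ->
  (finite_set X \/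
   exists e : lp_exp, lp_exp_valid e /\
     forall x y, X x -> X y -> d x y = lp_dist e x y) ->
  (forall x, X x -> X (S x)) ->
  (forall x, X x -> X (T x)) ->
  (compatible X d S T <-> compatible_A X d S T) /\
  (compatible_A X d S T <-> compatible_P X d S T).
Proof.
  intros [Hlen [_ Hmet]] Hcase HS HT.
  assert (Hdisc : uniformly_discrete X d).
  { destruct Hcase as [Hfin | [e [He Hd]]].
    - exact (finite_uniformly_discrete X d Hmet Hfin).
    - exact (lp_uniformly_discrete n X d e Hlen He Hd). }
  rewrite (compatible_iff_coincide X d S T Hmet Hdisc HS HT),
          (compatible_A_iff_coincide X d S T Hmet Hdisc HS HT),
          (compatible_P_iff_coincide X d S T Hmet Hdisc HS HT).
  tauto.
Qed.
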